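(* Let $G$ be a finite group of order $n$, and $X\subseteq G$ a non-empty proper subset of size $m$. If $m>n-\frac12-\sqrt{n-\frac34}$, then $X$ is $2$-generic in $G$. Hence if $m<\frac12+\sqrt{n-\frac34}$, then $X$ is not $2$-large in $G$.
   Context: For $X\subseteq G$: $X$ is $k$-large in $G$ if the intersection of any $k$ left translates $g_1X\cap\dots\cap g_kX$ ($g_i\in G$) is non-empty; $X$ is $k$-generic in $G$ if there are $g_1,\dots,g_k\in G$ with $G=\bigcup_{i\le k}g_iX$. *)

From mathcomp Require Import all_boot all_order all_algebra all_fingroup all_field.
Set Implicit Arguments. Unset Strict Implicit. Unset Printing Implicit Defensive.

Local Open Scope group_scope.

(* The finite group G is the whole carrier of gT : finGroupType.
   Left translate gX is the left coset  g *: X. *)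

Definition k_large (gT : finGroupType) (k : nat) (X : {set gT}) : Prop :=
  forall g : 'I_k -> gT, \bigcap_(i < k) (g i *: X) != set0.

Definition k_generic (gT : finGroupType) (k : nat) (X : {set gT}) : Prop :=
  exists g : 'I_k -> gT, \bigcup_(i < k) (g i *: X) = [set: gT].

From mathcomp Require Import all_boot all_order all_algebra all_fingroup all_field.
From mathcomp Require Import zify lra.
Import Order.TTheory GRing.Theory Num.Theory.

Set Implicit Arguments.
Unset Strict Implicit.
Unset Printing Implicit Defensive.

(* If Y meets its translate g Y for some g <> 1, then g = x y^-1 for two
   distinct x, y in Y; there are at most |Y|(|Y| - 1) such quotients, so when
   |Y|(|Y| - 1) < |G| - 1 some translate of Y is disjoint from Y.  Applied to
   Y = X this makes X not 2-large; applied to the complement of X it makes X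
   2-generic, since X :|: g X = G iff ~: X and g (~: X) are disjoint.  The
   real inequalities of the statement are exactly |Y|(|Y| - 1) < |G| - 1 for
   |Y| = |X| and |Y| = |G| - |X| respectively. *)

Definition offdiag (T : finType) (A : {set T}) : {set T * T} :=
  [set p in setX A A | p.1 != p.2].

Lemma card_offdiag (T : finType) (A : {set T}) :
  (#|offdiag A| + #|A| = #|A| * #|A|)%N.
Proof.
rewrite -cardsX -(cardsID [set p | p.1 == p.2] (setX A A)) addnC.
congr (_ + _)%N; last by apply: eq_card => p; rewrite !inE andbC.
have diag_inj : injective (fun x : T => (x, x)) by move=> x y [].
rewrite -(card_imset (mem A) diag_inj); apply: eq_card => -[x y].
rewrite !inE /=; apply/imsetP/andP => [[z zA [-> ->]] | [/andP[xA _] /eqP <-]].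
  by rewrite zA.
by exists x.
Qed.

Section DisjointTranslate.
Local Open Scope group_scope.
Variable gT : finGroupType.
Implicit Types (X Y : {set gT}) (g : gT).

Lemma meeting_translate_quotient Y g :
  g != 1 -> Y :&: g *: Y != set0 ->
  g \in [set p.1 * p.2^-1 | p in offdiag Y].
Proof.
move=> g_nt /set0Pn[x]; rewrite !inE mem_lcoset => /andP[xY gxY].
apply/imsetP; exists (x, g^-1 * x); last by rewrite /= invMg invgK mulKVg.
rewrite !inE /= xY gxY; apply: contra g_nt => /eqP x_eq.
by rewrite -eq_invg1 -[g^-1]mulg1 -(mulgV x) mulgA -x_eq mulgV.
Qed.

Lemma exists_disjoint_lcoset Y :
  (#|Y| * #|Y| + 1 < #|gT| + #|Y|)%N -> exists g, Y :&: g *: Y = set0.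
Proof.
move=> small_Y.
have [g /eqP disj | all_meet] := pickP (fun g => Y :&: g *: Y == set0).
  by exists g.
exfalso.
have le_card : (#|gT|.-1 <= #|offdiag Y|)%N.
  apply: leq_trans (leq_imset_card (fun p : gT * gT => p.1 * p.2^-1) _).
  rewrite -(cardsC1 1); apply/subset_leq_card/subsetP => g; rewrite !inE => g_nt.
  exact: meeting_translate_quotient g_nt (negbT (all_meet g)).
have := card_offdiag Y; have : (0 < #|gT|)%N by apply/card_gt0P; exists 1.
lia.
Qed.

Lemma lcosetC X g : g *: ~: X = ~: (g *: X).
Proof. by apply/setP => x; rewrite inE !mem_lcoset inE. Qed.

Lemma generic2_of_disjoint_compl X g :
  ~: X :&: g *: ~: X = set0 -> k_generic 2 X.
Proof.
rewrite lcosetC -setCU => /(congr1 (@setC _)); rewrite setC0 setCK => cover.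
exists (fun i : 'I_2 => if i == ord0 then 1 else g).
by rewrite big_ord_recl big_ord1 /= lcoset1.
Qed.

Lemma not_large2_of_disjoint X g : X :&: g *: X = set0 -> ~ k_large 2 X.
Proof.
move=> disj large; have := large (fun i : 'I_2 => if i == ord0 then 1 else g).
by rewrite big_ord_recl big_ord1 /= lcoset1 disj eqxx.
Qed.

End DisjointTranslate.

Local Open Scope ring_scope.

(* Squaring k - 1/2 < sqrt (n - 3/4) gives k^2 - k + 1 < n. *)
Lemma ltn_of_lt_half_add_sqrt (R : rcfType) (n k : nat) : (0 < k)%N ->
  k%:R < 2%:R^-1 + Num.sqrt (n%:R - 3%:R / 4%:R) :> R -> (k * k + 1 < n + k)%N.
Proof.
move=> k_gt0 lt_k; rewrite -(ltr_nat R) !natrD natrM.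
have k_ge1 : 1 <= k%:R :> R by rewrite ler1n.
move: lt_k; set s := Num.sqrt _; have s_ge0 : 0 <= s by exact: sqrtr_ge0.
have [n_lt|n_ge] := ltrP (n%:R : R) (3%:R / 4%:R).
  by rewrite /s ltr0_sqrtr ?subr_lt0 //; lra.
have s_sqr : s * s = n%:R - 3%:R / 4%:R by rewrite -expr2 sqr_sqrtr ?subr_ge0.
nra.
Qed.

Theorem theorem2p8 (R : rcfType) (gT : finGroupType) (X : {set gT}) :
  X != set0 -> X != [set: gT] ->
  ((#|gT|%:R - 2%:R^-1 - Num.sqrt (#|gT|%:R - 3%:R / 4%:R) < #|X|%:R :> R)%R ->
     k_generic 2 X) /\
  ((#|X|%:R < 2%:R^-1 + Num.sqrt (#|gT|%:R - 3%:R / 4%:R) :> R)%R ->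
     ~ k_large 2 X).
Proof.
move=> X_n0 X_nT; set s := Num.sqrt _; split=> [lt_X | lt_X].
- have XC_gt0 : (0 < #|~: X|)%N.
    by rewrite card_gt0; apply: contraNneq X_nT => XC0; rewrite -[X]setCK XC0 setC0.
  have card_XC : #|gT|%:R = #|X|%:R + #|~: X|%:R :> R by rewrite -natrD cardsC.
  have lt_XC : #|~: X|%:R < 2%:R^-1 + s :> R by move: lt_X; rewrite card_XC; lra.
  have [g disj] := exists_disjoint_lcoset (ltn_of_lt_half_add_sqrt XC_gt0 lt_XC).
  exact: generic2_of_disjoint_compl disj.
- have X_gt0 : (0 < #|X|)%N by rewrite card_gt0.
  have [g disj] := exists_disjoint_lcoset (ltn_of_lt_half_add_sqrt X_gt0 lt_X).
  exact: not_large2_of_disjoint disj.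
Qed.
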